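(* For every integer $n\ge 1$, with $\omega_n:=\max\{r: c_r(n)\neq 0\}$ the clique number of $G_n$, \[ \chi(K_n)=\sum_{r=1}^{\omega_n}(-1)^{r-1}c_r(n)=\chi(N_n). \]
   Context: $G_n$ is the partition graph on the set of integer partitions of $n$: two partitions are adjacent if one is obtained from the other by decreasing one part by $1$ and increasing another part (possibly a part equal to $0$) by $1$, followed by reordering, with the result different from the original. $K_n=\operatorname{Cl}(G_n)$ is its clique complex, and $c_r(n)$ is the number of $r$-vertex cliques of $G_n$. For $\lambda=(\lambda_1\ge\lambda_2\ge\cdots)\vdash n$ of length $\ell$, a removable corner is a row $i$ with $\lambda_i>\lambda_{i+1}$, and an addable corner is a row $j\le\ell+1$ with $j=1$ or $\lambda_{j-1}>\lambda_j$. For a removable corner $c=i$ and addable corner $a=j$, $i\ne j$, $\lambda(c\to a)$ is obtained by decreasing $\lambda_i$ by $1$, increasing $\lambda_j$ by $1$, and reordering; the transfer is admissible if $\lambda(c\to a)\ne\lambda$. With $A_{\max}(\lambda,c)=\{a:\lambda(c\to a)\text{ admissible}\}$ and $C_{\max}(\lambda,a)=\{c:\lambda(c\to a)\text{ admissible}\}$, the full star-simplex is $\Sigma^{\star}_{\max}(\lambda,c)=\{\lambda\}\cup\{\lambda(c\to a):a\in A_{\max}(\lambda,c)\}$ and the full top-simplex is $\Sigma^{\top}_{\max}(\lambda,a)=\{\lambda\}\cup\{\lambda(c\to a):c\in C_{\max}(\lambda,a)\}$. $C_n$ is the family of all distinct full star- and full top-simplices (each regarded as a full simplex subcomplex of $K_n$),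 and $N_n$ is its nerve: the simplicial complex on vertex set $C_n$ whose simplices are nonempty subfamilies with nonempty common intersection. *)

From mathcomp Require Import all_boot all_order all_algebra.
Set Implicit Arguments. Unset Strict Implicit. Unset Printing Implicit Defensive.
Import GRing.Theory.

(* A partition of n is encoded by its rows lambda_1 >= lambda_2 >= ... padded
   with zeros to exactly n+1 rows (rows indexed 0..n, 0-based).  Since any
   partition of n has length <= n, the last row is always 0, so row l+1
   (the "zero part" / addable corner below the last row) always exists. *)

Definition ptf (n : nat) (f : {ffun 'I_n.+1 -> 'I_n.+1}) (k : nat) : nat :=
  nth 0 [seq val (f i) | i <- enum 'I_n.+1] k.

Definition is_part (n : nat) (f : {ffun 'I_n.+1 -> 'I_n.+1}) : bool :=
  [forall i : 'I_n.+1, ptf f i.+1 <= ptf f i] && ((\sum_i val (f i)) == n).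

Definition part (n : nat) := {f : {ffun 'I_n.+1 -> 'I_n.+1} | @is_part n f}.

(* value of row k (0-based), 0 beyond the stored rows *)
Definition pt (n : nat) (l : part n) (k : nat) : nat := ptf (val l) k.

(* [moved l m i j] : m is obtained from l by decreasing row i by 1 and
   increasing row j by 1 (then reordering): equality as multisets of rows. *)
Definition moved (n : nat) (l m : part n) (i j : nat) : bool :=
  (0 < pt l i) &&
  perm_eq [seq pt l k + (k == j) - (k == i) | k <- iota 0 n.+1]
          [seq pt m k | k <- iota 0 n.+1].

Definition adj (n : nat) (l m : part n) : bool :=
  (l != m) && [exists i : 'I_n.+1, exists j : 'I_n.+1,
                 (i != j) && moved l m i j].

Definition is_clique (n : nat) (S : {set part n}) : bool :=
  [forall x in S, forall y in S, (x != y) ==> adj x y].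

Definition ccount (n r : nat) : nat :=
  #|[set S : {set part n} | is_clique S && (#|S| == r)]|.

(* clique number omega_n = max { r : c_r(n) <> 0 }; c_r(n) = 0 for r > #|G_n| *)
Definition omega (n : nat) : nat :=
  \max_(r < #|{: part n}|.+1 | ccount n r != 0) r.

Definition euler_K (n : nat) : int :=
  (\sum_(S : {set part n} | is_clique S && (S != set0)) (-1) ^+ (#|S|.-1))%R.

Definition removable (n : nat) (l : part n) (i : 'I_n.+1) : bool :=
  pt l i.+1 < pt l i.
Definition addable (n : nat) (l : part n) (j : 'I_n.+1) : bool :=
  (val j == 0) || (pt l j < pt l j.-1).

Definition star_simplex (n : nat) (l : part n) (c : 'I_n.+1) : {set part n} :=
  l |: [set m | (m != l) &&
        [exists a : 'I_n.+1, [&& addable l a, a != c & moved l m c a]]].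

Definition top_simplex (n : nat) (l : part n) (a : 'I_n.+1) : {set part n} :=
  l |: [set m | (m != l) &&
        [exists c : 'I_n.+1, [&& removable l c, c != a & moved l m c a]]].

Definition Cfam (n : nat) : {set {set part n}} :=
  [set S | [exists l : part n, exists c : 'I_n.+1,
              removable l c && (S == star_simplex l c)]]
  :|: [set S | [exists l : part n, exists a : 'I_n.+1,
              addable l a && (S == top_simplex l a)]].

Definition euler_N (n : nat) : int :=
  \sum_(F : {set {set part n}} |
          [&& F \subset Cfam n, F != set0 &
              [exists v : part n, [forall S in F, v \in S]]])
     ((-1) ^+ (#|F|.-1))%R.

From mathcomp Require Import all_boot all_order all_algebra.
From mathcomp Require Import zify.
From Stdlib Require Import Classical.
Import GRing.Theory.

(* Describe a partition by its conjugate: an edge of G_n moves one box from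
   column x to column y of the Young diagram.  If two moves out of l lead to
   adjacent partitions, they share their source or their target column; hence
   every clique of G_n through l is contained in a full star-simplex (common
   source) or a full top-simplex (common target) at l, and C_n covers K_n by
   full simplices.  Counting the pairs (F, A) of a subfamily F of C_n and a
   simplex A inside its common intersection, with the alternating sum over the
   nonempty subsets of a nonempty set equal to 1, gives chi(K_n) = chi(N_n).
   The first equality only groups the cliques by size. *)

Set Implicit Arguments.
Unset Strict Implicit.
Unset Printing Implicit Defensive.

Lemma sorted_geq_nth_count (s : seq nat) k v : sorted geq s -> k < size s ->
  (v <= nth 0 s k) = (k < count (leq v) s).
Proof.
elim: s k => [|x s IH] k //= Hs Hk.
have Hall : all (geq x) s by apply: (order_path_min (rev_trans leq_trans)).
have Hs' : sorted geq s by apply: path_sorted Hs.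
case: (leqP v x) => vx.
  by case: k Hk => [|k] Hk //=; rewrite add1n ltnS IH.
have c0 : count (leq v) s = 0.
  apply/eqP; rewrite -leqn0 leqNgt -has_count; apply/hasPn => y ys.
  by rewrite -ltnNge; apply: leq_ltn_trans vx; exact: (allP Hall).
rewrite c0 /=; case: k Hk => [|k] Hk /=; first by rewrite leqNgt vx.
apply/negbTE; rewrite -ltnNge; apply: leq_ltn_trans vx.
exact: (allP Hall) (mem_nth 0 _).
Qed.

Lemma count_leqS (s : seq nat) x :
  count (leq x) s = count_mem x s + count (leq x.+1) s.
Proof. by elim: s => //= y s ->; case: (ltngtP x y) => //=; lia. Qed.

Lemma perm_eq_count_leq (s t : seq nat) :
  (forall k, count (leq k) s = count (leq k) t) -> perm_eq s t.
Proof.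
move=> H; apply/allP => x _; apply/eqP.
by have := H x; have := H x.+1; rewrite (count_leqS s x) (count_leqS t x); lia.
Qed.

Lemma sumn_gt0_count (s : seq nat) : (0 < sumn s) = (0 < count (leq 1) s).
Proof. by elim: s => //= x s IH; case: x => [|x] /=; rewrite ?IH //; lia. Qed.

Lemma count_leq1_sumn (s : seq nat) : count (leq 1) s <= sumn s.
Proof. by elim: s => //= x s IH; case: x => [|x] /=; lia. Qed.

(* [f] and [g] differ only at [i] and [j]; the values there are moved across
   the equation so that no subtraction occurs. *)
Lemma count_map_iota_update2 (P : pred nat) (f g : nat -> nat) i j N :
  i != j -> (forall p, p != i -> p != j -> f p = g p) ->
  count P (map f (iota 0 N)) + (i < N) * P (g i) + (j < N) * P (g j) =
  count P (map g (iota 0 N)) + (i < N) * P (f i) + (j < N) * P (f j).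
Proof.
move=> ij Hfg; elim: N => [|N IH] //.
rewrite -addn1 iotaD !map_cat !count_cat /= !addn0 add0n.
have ltN1 k : (k < N + 1) = (k == N) || (k < N) by rewrite addn1 ltnS leq_eqVlt.
rewrite !ltN1.
case: (eqVneq i N) => [eiN|niN]; case: (eqVneq j N) => [ejN|njN].
- by move: ij; rewrite eiN ejN eqxx.
- by subst i; rewrite ltnn /=; move: IH; rewrite ltnn /=; lia.
- by subst j; rewrite ltnn /=; move: IH; rewrite ltnn /=; lia.
- by rewrite Hfg 1?eq_sym //=; move: IH; lia.
Qed.

Section PartitionGraph.
Variable n : nat.
Implicit Types l m : part n.

Definition rows l : seq nat := [seq val (val l i) | i <- enum 'I_n.+1].

(* The k-th part of the conjugate partition for [k > 0]; [conjp l 0] counts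
   all [n.+1] stored rows. *)
Definition conjp l k := count (leq k) (rows l).

Lemma size_rows l : size (rows l) = n.+1.
Proof. by rewrite size_map size_enum_ord. Qed.

Lemma map_pt_iota l : [seq pt l k | k <- iota 0 n.+1] = rows l.
Proof. by rewrite -(size_rows l) -[RHS](mkseq_nth 0). Qed.

Lemma sorted_rows l : sorted geq (rows l).
Proof.
apply/(sortedP 0) => i; rewrite size_rows => Hi.
have := valP l; rewrite /is_part => /andP [/forallP H _].
exact: H (Ordinal (ltnW Hi)).
Qed.

Lemma sumn_rows l : sumn (rows l) = n.
Proof.
have := valP l; rewrite /is_part => /andP [_ /eqP <-].
by rewrite sumnE big_map big_enum.
Qed.

Lemma conjp0 l : conjp l 0 = n.+1.
Proof. by rewrite /conjp (eq_count (a2 := predT)) // count_predT size_rows. Qed.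

Lemma conjp_le l k : conjp l k <= n.+1.
Proof. by rewrite -(size_rows l) count_size. Qed.

Lemma leq_pt_conjp l k v : 0 < v -> (v <= pt l k) = (k < conjp l v).
Proof.
move=> v0; case: (ltnP k n.+1) => Hk.
  by apply: sorted_geq_nth_count; rewrite ?size_rows ?sorted_rows.
rewrite /pt /ptf nth_default; last by rewrite size_map size_enum_ord.
rewrite leqNgt v0; apply/esym/negbTE; rewrite -leqNgt.
exact: leq_trans (conjp_le l v) Hk.
Qed.

Lemma conjp_antimono l : {homo conjp l : k k' / k <= k' >-> k' <= k}.
Proof. by move=> k k' kk'; apply: sub_count => v /=; apply: leq_trans. Qed.

Lemma conjp_inj l m : (forall k, conjp l k = conjp m k) -> l = m.
Proof.
move=> H.
have E : rows l = rows m.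
  apply: (sorted_eq (rev_trans leq_trans)); rewrite ?sorted_rows //;
    last exact: perm_eq_count_leq.
  by move=> a b /andP [/= ba ab]; apply/eqP; rewrite eqn_leq ab ba.
apply/val_inj/ffunP => i; apply: val_inj.
have := congr1 (nth 0 ^~ i) E.
by rewrite !(nth_map ord0) -?enumT ?size_enum_ord ?ltn_ord // nth_ord_enum.
Qed.

Lemma conjp1_gt0 l : 0 < n -> 0 < conjp l 1.
Proof. by rewrite -sumn_gt0_count sumn_rows. Qed.

Lemma conjp_lt l y : 0 < y -> conjp l y < n.+1.
Proof.
move=> y0; rewrite ltnS (leq_trans (@conjp_antimono l 1 y y0)) //.
by rewrite -[X in _ <= X](sumn_rows l) count_leq1_sumn.
Qed.

Lemma removable_conjp l x : 0 < x -> 0 < conjp l x ->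
  removable l (inord (conjp l x).-1).
Proof.
move=> x0 c0; have ci : (conjp l x).-1 < n.+1 by rewrite prednK ?conjp_le.
rewrite /removable inordK //.
apply: (@leq_trans x); last by rewrite (leq_pt_conjp _ _ x0) prednK.
by rewrite prednK // ltnNge (leq_pt_conjp _ _ x0) ltnn.
Qed.

Lemma addable_conjp l y : 0 < y -> addable l (inord (conjp l y)).
Proof.
move=> y0; rewrite /addable /= !inordK ?conjp_lt //.
case: (posnP (conjp l y)) => [-> //|c0].
apply/orP; right; apply: (@leq_trans y).
  by rewrite ltnNge (leq_pt_conjp _ _ y0) ltnn.
by rewrite (leq_pt_conjp _ _ y0) prednK.
Qed.

Lemma pt_conjp_pred l x : 0 < x -> conjp l x.+1 < conjp l x ->
  pt l (conjp l x).-1 = x.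
Proof.
move=> x0 lt; have c0 : 0 < conjp l x by apply: leq_ltn_trans lt.
apply/eqP; rewrite eqn_leq -ltnS ltnNge (leq_pt_conjp _ _ (ltn0Sn x)).
by rewrite (leq_pt_conjp _ _ x0) prednK // -ltnNge lt leqnn.
Qed.

Lemma pt_conjp l y : 0 < y -> conjp l y < conjp l y.-1 -> pt l (conjp l y) = y.-1.
Proof.
move=> y0 lt; apply/eqP; rewrite eqn_leq -ltnS prednK //.
rewrite ltnNge (leq_pt_conjp _ _ y0) ltnn /=.
by case: (posnP y.-1) => [-> //|p1]; rewrite (leq_pt_conjp _ _ p1).
Qed.

Lemma count_moved_rows l (i j : nat) k :
  i < n.+1 -> j < n.+1 -> 0 < pt l i -> i != j ->
  count (leq k) [seq pt l p + (p == j) - (p == i) | p <- iota 0 n.+1]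
    + (k == pt l i) = conjp l k + (k == (pt l j).+1).
Proof.
move=> Hi Hj pi ij.
have Hfg p : p != i -> p != j -> pt l p + (p == j) - (p == i) = pt l p.
  by move=> /negbTE -> /negbTE ->; rewrite addn0 subn0.
have := @count_map_iota_update2 (leq k) _ (pt l) i j n.+1 ij Hfg.
rewrite Hi Hj map_pt_iota !mul1n eqxx (negbTE ij) (eq_sym j) (negbTE ij).
have Fi : (k <= pt l i) = (k == pt l i) + (k <= (pt l i).-1) :> nat.
  by case: (ltngtP k (pt l i)) => //=; lia.
have Fj : (k <= (pt l j).+1) = (k == (pt l j).+1) + (k <= pt l j) :> nat.
  by case: (ltngtP k (pt l j).+1) => //=; lia.
rewrite /conjp eqxx /= addn0 subn0 addn1 subn1; move: Fi Fj (ltn_predK pi); lia.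
Qed.

(* [box_move l m x y]: [m] arises from [l] by moving one box from the end of a
   row of length [x] to the end of a row of length [y - 1], i.e. column [x] of
   the Young diagram loses a box and column [y] gains one. *)
Definition box_move l m x y := forall k, conjp m k + (k == x) = conjp l k + (k == y).

Lemma box_move_sym l m x y : box_move l m x y -> box_move m l y x.
Proof. by move=> H k; rewrite H. Qed.

Lemma box_move_same_source l u v x yu yv :
  box_move l u x yu -> box_move l v x yv -> box_move u v yu yv.
Proof. by move=> Hu Hv k; have := Hu k; have := Hv k; lia. Qed.

Lemma box_move_same_target l u v xu xv y :
  box_move l u xu y -> box_move l v xv y -> box_move v u xu xv.
Proof. by move=> Hu Hv k; have := Hu k; have := Hv k; lia. Qed.

Lemma box_move_eqE l m x y : box_move l m x y -> (m == l) = (x == y).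
Proof.
move=> H; apply/eqP/eqP => [ml|xy].
  case: (eqVneq x y) => // nxy.
  by move: (H x); rewrite ml eqxx (negbTE nxy); lia.
by apply: conjp_inj => k; have := H k; rewrite xy; lia.
Qed.

Lemma box_move_gt0 l m x y : box_move l m x y -> m != l -> 0 < x /\ 0 < y.
Proof.
move=> H; rewrite (box_move_eqE H) => xy.
by have := H 0; rewrite !conjp0; move: xy; lia.
Qed.

Lemma moved_box_move l m (i j : 'I_n.+1) :
  i != j -> moved l m i j -> box_move l m (pt l i) (pt l j).+1.
Proof.
move=> ij /andP [pi Hp] k.
rewrite -(count_moved_rows k (ltn_ord i) (ltn_ord j) pi ij); congr (_ + _).
by rewrite /conjp -map_pt_iota (permP Hp).
Qed.

Lemma box_move_conjp_lt l m x y : box_move l m x y -> m != l ->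
  conjp l x.+1 < conjp l x /\ conjp l y < conjp l y.-1.
Proof.
move=> H ml; have xy : x != y by rewrite -(box_move_eqE H).
have [_ y0] := box_move_gt0 H ml.
have := H x; have := H x.+1; have := H y; have := H y.-1.
have mx := @conjp_antimono m x x.+1 (leqnSn x).
have my := @conjp_antimono m y.-1 y (leq_pred y).
by move: xy; lia.
Qed.

Lemma box_move_moved l m x y : box_move l m x y -> m != l ->
  let i : 'I_n.+1 := inord (conjp l x).-1 in let j : 'I_n.+1 := inord (conjp l y) in
  i != j /\ moved l m i j.
Proof.
move=> H ml i j; have xy : x != y by rewrite -(box_move_eqE H).
have [x0 y0] := box_move_gt0 H ml.
have [ltx lty] := box_move_conjp_lt H ml.
have cx : 0 < conjp l x by apply: leq_ltn_trans ltx.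
have vi : i = (conjp l x).-1 :> nat by rewrite inordK // prednK ?conjp_le.
have vj : j = conjp l y :> nat by rewrite inordK ?conjp_lt.
have pti : pt l i = x by rewrite vi pt_conjp_pred.
have ptj : (pt l j).+1 = y by rewrite vj pt_conjp ?prednK.
have ij : i != j.
  apply/eqP => eij; have yx : y = x.+1 by rewrite -ptj -pti eij.
  have mxy : conjp m y <= conjp m x by apply: conjp_antimono; rewrite yx.
  have := H x; have := H y; move: (congr1 (@nat_of_ord _) eij) vi vj yx cx; lia.
have pi : 0 < pt l i by rewrite pti.
split=> //; apply/andP; split=> //.
rewrite -[X in perm_eq _ X]/(map (pt m) (iota 0 n.+1)) map_pt_iota.
apply: perm_eq_count_leq => k.
have := count_moved_rows k (ltn_ord i) (ltn_ord j) pi ij.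
by rewrite pti ptj /conjp; have := H k; rewrite /conjp; lia.
Qed.

Lemma adj_box_move l m : adj l m <-> m != l /\ exists x y, box_move l m x y.
Proof.
split=> [|[ml [x [y H]]]].
  case/andP => lm /existsP [i /existsP [j /andP [ij Hm]]].
  split; first by rewrite eq_sym.
  by exists (pt l i), (pt l j).+1; apply: moved_box_move.
have [ij Hm] := box_move_moved H ml.
apply/andP; split; first by rewrite eq_sym.
apply/existsP; exists (inord (conjp l x).-1).
by apply/existsP; exists (inord (conjp l y)); rewrite ij.
Qed.

Lemma box_move_adj l m x y : box_move l m x y -> m != l -> adj l m.
Proof. by move=> H ml; apply/adj_box_move; split=> //; exists x, y. Qed.

Lemma adj_sym l m : adj l m -> adj m l.
Proof.
case/adj_box_move => ml [x [y /box_move_sym H]].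
by apply: box_move_adj H _; rewrite eq_sym.
Qed.

Lemma box_move_uniq l m x y x' y' :
  box_move l m x y -> box_move l m x' y' -> m != l -> x = x' /\ y = y'.
Proof.
move=> H H' ml; have xy : x != y by rewrite -(box_move_eqE H).
have E k : (k == x) + (k == y') = (k == x') + (k == y) :> nat.
  by have := H k; have := H' k; lia.
have ex : x = x'.
  have := E x; rewrite eqxx (negbTE xy).
  by case: eqP => // _; case: eqP.
subst x'; split=> //.
by have := E y; rewrite eqxx eq_sym (negbTE xy); case: eqP.
Qed.

Lemma box_move_common l m w x1 y1 x2 y2 :
  box_move l m x1 y1 -> box_move l w x2 y2 -> m != l -> w != l -> adj m w ->
  x1 = x2 \/ y1 = y2.
Proof.
move=> H1 H2 ml wl /adj_box_move [_ [p [q H3]]].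
have xy1 : x1 != y1 by rewrite -(box_move_eqE H1).
have xy2 : x2 != y2 by rewrite -(box_move_eqE H2).
have E k : (k == y2) + (k == x1) + (k == p) = (k == x2) + (k == y1) + (k == q) :> nat.
  by have := H1 k; have := H2 k; have := H3 k; lia.
have [-> | nx] := eqVneq x1 x2; [by left | right].
have [// | ny] := eqVneq y1 y2; exfalso.
have := E y2; rewrite eqxx (eq_sym y2 x2) (negbTE xy2) (eq_sym y2 y1) (negbTE ny).
case: (eqVneq y2 q) => [eyq | nq]; last by lia.
subst q => Eq.
case: (eqVneq y2 x1) Eq => [ex | nyx] Eq; first by lia.
have := E x1; rewrite eqxx (negbTE nx) (negbTE xy1) (eq_sym x1 y2) (negbTE nyx); lia.
Qed.

Lemma is_cliqueP (S : {set part n}) :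
  reflect (forall u v, u \in S -> v \in S -> u != v -> adj u v) (is_clique S).
Proof.
apply: (iffP forall_inP) => [H u v uS vS uv | H u uS].
  by move: (H u uS) => /forall_inP /(_ v vS) /implyP; apply.
by apply/forall_inP => v vS; apply/implyP; apply: H.
Qed.

Definition common_source l x (S : {set part n}) :=
  forall m, m \in S -> m != l -> exists y, box_move l m x y.

Definition common_target l y (S : {set part n}) :=
  forall m, m \in S -> m != l -> exists x, box_move l m x y.

Lemma common_source_clique l x S : common_source l x S -> is_clique S.
Proof.
move=> H; apply/is_cliqueP => u v uS vS uv.
case: (eqVneq u l) => [eul | ul]; case: (eqVneq v l) => [evl | vl].
- by move: uv; rewrite eul evl eqxx.
- by have [y Hv] := H v vS vl; rewrite eul; apply: box_move_adj Hv vl.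
- by have [y Hu] := H u uS ul; rewrite evl; apply/adj_sym/(box_move_adj Hu ul).
have [yu Hu] := H u uS ul; have [yv Hv] := H v vS vl.
by apply: box_move_adj (box_move_same_source Hu Hv) _; rewrite eq_sym.
Qed.

Lemma common_target_clique l y S : common_target l y S -> is_clique S.
Proof.
move=> H; apply/is_cliqueP => u v uS vS uv.
case: (eqVneq u l) => [eul | ul]; case: (eqVneq v l) => [evl | vl].
- by move: uv; rewrite eul evl eqxx.
- by have [x Hv] := H v vS vl; rewrite eul; apply: box_move_adj Hv vl.
- by have [x Hu] := H u uS ul; rewrite evl; apply/adj_sym/(box_move_adj Hu ul).
have [xu Hu] := H u uS ul; have [xv Hv] := H v vS vl.
exact/adj_sym/(box_move_adj (box_move_same_target Hu Hv) uv).
Qed.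

Lemma star_simplex_common_source l (c : 'I_n.+1) :
  common_source l (pt l c) (star_simplex l c).
Proof.
move=> m; rewrite !inE => /orP [/eqP -> | /andP [_ /existsP [a /and3P [_ ac Hm]]]] ml.
  by rewrite eqxx in ml.
by exists (pt l a).+1; apply: moved_box_move Hm; rewrite eq_sym.
Qed.

Lemma top_simplex_common_target l (a : 'I_n.+1) :
  common_target l (pt l a).+1 (top_simplex l a).
Proof.
move=> m; rewrite !inE => /orP [/eqP -> | /andP [_ /existsP [c /and3P [_ ca Hm]]]] ml.
  by rewrite eqxx in ml.
by exists (pt l c); apply: moved_box_move Hm.
Qed.

Lemma Cfam_clique X : X \in Cfam n -> is_clique X.
Proof.
rewrite !inE => /orP [] /existsP [l /existsP [c /andP [_ /eqP ->]]].
  exact: common_source_clique (@star_simplex_common_source _ _).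
exact: common_target_clique (@top_simplex_common_target _ _).
Qed.

Lemma common_source_sub_Cfam l x S : 0 < x -> 0 < conjp l x ->
  common_source l x S -> exists2 X, X \in Cfam n & S \subset X.
Proof.
move=> x0 cx H; set c : 'I_n.+1 := inord (conjp l x).-1.
exists (star_simplex l c).
  rewrite !inE; apply/orP; left; apply/existsP; exists l; apply/existsP; exists c.
  by rewrite removable_conjp ?eqxx.
apply/subsetP => m mS; rewrite !inE; case: (eqVneq m l) => [-> | ml] //=.
have [y Hm] := H m mS ml; have [_ y0] := box_move_gt0 Hm ml.
have [ij mv] := box_move_moved Hm ml.
by apply/existsP; exists (inord (conjp l y)); rewrite addable_conjp // eq_sym ij.
Qed.

Lemma common_target_sub_Cfam l y S : 0 < y ->
  common_target l y S -> exists2 X, X \in Cfam n & S \subset X.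
Proof.
move=> y0 H; set a : 'I_n.+1 := inord (conjp l y).
exists (top_simplex l a).
  rewrite !inE; apply/orP; right; apply/existsP; exists l; apply/existsP; exists a.
  by rewrite addable_conjp ?eqxx.
apply/subsetP => m mS; rewrite !inE; case: (eqVneq m l) => [-> | ml] //=.
have [x Hm] := H m mS ml; have [x0 _] := box_move_gt0 Hm ml.
have [ltx _] := box_move_conjp_lt Hm ml.
have [ij mv] := box_move_moved Hm ml.
apply/existsP; exists (inord (conjp l x).-1).
by rewrite removable_conjp ?ij // (leq_ltn_trans _ ltx).
Qed.

Lemma clique_common_target S l m0 m1 x0 x1 y :
  is_clique S -> l \in S -> m0 \in S -> m1 \in S -> m0 != l -> m1 != l ->
  x0 != x1 -> box_move l m0 x0 y -> box_move l m1 x1 y -> common_target l y S.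
Proof.
move/is_cliqueP=> cS lS m0S m1S m0l m1l x01 H0 H1 m mS ml.
have /adj_box_move [_ [x [y' Hm]]] : adj l m by apply: cS; rewrite // eq_sym.
exists x; suff <- : y' = y by [].
have shared mi xi : mi \in S -> mi != l -> box_move l mi xi y -> x = xi \/ y' = y.
  move=> miS mil Hi; case: (eqVneq m mi) Hi => [<- | mmi] Hi.
    by right; have [_ ->] := box_move_uniq Hm Hi ml.
  exact: box_move_common Hm Hi ml mil (cS m mi mS miS mmi).
case: (shared m0 x0 m0S m0l H0) => [ex0 | //].
case: (shared m1 x1 m1S m1l H1) => [ex1 | //].
by rewrite -ex0 -ex1 eqxx in x01.
Qed.

Lemma clique_common_source_or_target S l m0 x0 y0 :
  is_clique S -> l \in S -> m0 \in S -> m0 != l -> box_move l m0 x0 y0 ->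
  common_source l x0 S \/ common_target l y0 S.
Proof.
move=> cS lS m0S m0l H0.
case: (classic (common_source l x0 S)) => [| not_src]; [by left | right].
have [m1 m1S [m1l not_x0]] :
    exists2 m1, m1 \in S & m1 != l /\ forall y, ~ box_move l m1 x0 y.
  apply: NNPP => none; apply: not_src => m mS ml; apply: NNPP => no_y.
  by apply: none; exists m => //; split=> // y Hy; apply: no_y; exists y.
have /adj_box_move [_ [x1 [y1 H1]]] : adj l m1.
  by move/is_cliqueP: cS; apply; rewrite // eq_sym.
have x01 : x0 != x1 by apply/eqP => ex; apply: (not_x0 y1); rewrite ex.
have m01 : m0 != m1 by apply/eqP => em; apply: (not_x0 y0); rewrite -em.
have /(box_move_common H0 H1 m0l m1l) [ex | ey] : adj m0 m1.
  - by move/is_cliqueP: cS; apply.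
  - by rewrite ex eqxx in x01.
rewrite -ey in H1; exact: clique_common_target cS lS m0S m1S m0l m1l x01 H0 H1.
Qed.

Lemma clique_sub_Cfam S : 0 < n -> is_clique S -> S != set0 ->
  exists2 X, X \in Cfam n & S \subset X.
Proof.
move=> n0 cS /set0Pn [l lS].
have [sub | /subsetPn [m0 m0S]] := boolP (S \subset [set l]).
  apply: (@common_source_sub_Cfam l 1) => //; first exact: conjp1_gt0.
  by move=> m /(subsetP sub); rewrite inE => /eqP ->; rewrite eqxx.
rewrite inE => m0l.
have /adj_box_move [_ [x0 [y0 H0]]] : adj l m0.
  by move/is_cliqueP: cS; apply; rewrite // eq_sym.
have [x00 y00] := box_move_gt0 H0 m0l; have [lt0 _] := box_move_conjp_lt H0 m0l.
case: (clique_common_source_or_target cS lS m0S m0l H0) => [src | tgt].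
  by apply: common_source_sub_Cfam src; rewrite // (leq_ltn_trans _ lt0).
exact: common_target_sub_Cfam tgt.
Qed.

End PartitionGraph.

Local Open Scope ring_scope.

Section AlternatingSums.
Variable T : finType.

(* Toggling [x] is a sign-reversing involution on the subsets of [X]. *)
Lemma sum_subset_sign_eq0 (X : {set T}) x : x \in X ->
  \sum_(A : {set T} | A \subset X) (-1) ^+ #|A| = 0 :> int.
Proof.
move=> xX; pose f (A : {set T}) := if x \in A then A :\ x else x |: A.
have fK : involutive f.
  move=> A; rewrite /f; case xA: (x \in A).
    by rewrite setD11 setD1K.
  by rewrite setU11 setU1K ?xA.
set s := \sum_(A | _) _; suff : s = - s by lia.
rewrite {1}/s (reindex_inj (inv_inj fK)) -sumrN.
apply: eq_big => A; rewrite /f; case: ifP => xA.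
- apply/idP/idP => [sub|]; last exact/subset_trans/subD1set.
  by rewrite -(setD1K xA) subUset sub1set xX.
- by rewrite subUset sub1set xX.
- by move=> _; rewrite (cardsD1 x A) xA add1n exprS mulN1r opprK.
- by move=> _; rewrite cardsU1 xA add1n exprS mulN1r.
Qed.

Lemma sum_nonempty_subset_sign (X : {set T}) : X != set0 ->
  \sum_(A : {set T} | (A \subset X) && (A != set0)) (-1) ^+ #|A|.-1 = 1 :> int.
Proof.
case/set0Pn => x xX; have := sum_subset_sign_eq0 xX.
rewrite (bigD1 set0) ?sub0set //= cards0 expr0 => /eqP.
rewrite addrC addr_eq0 => /eqP E.
rewrite -[RHS]opprK -[in RHS]E -sumrN.
apply: eq_bigr => A /andP [_ An0]; have : (0 < #|A|)%N by rewrite card_gt0.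
by case: #|A| => // k _; rewrite exprS mulN1r opprK.
Qed.

End AlternatingSums.

Lemma nerve_cap_subsetE (T : finType) (C F : {set {set T}}) (A : {set T}) : A != set0 ->
  [&& F \subset C, F != set0 & [exists v, [forall X in F, v \in X]]]
    && (A \subset \bigcap_(X in F) X)
  = (F \subset [set X in C | A \subset X]) && (F != set0).
Proof.
move=> /set0Pn [v vA]; apply/idP/andP => [/andP [/and3P [FC -> _] /bigcapsP AF]|].
  by split=> //; apply/subsetP => X XF; rewrite inE (subsetP FC) ?AF.
case=> /subsetP FCA Fn0.
have AF X : X \in F -> (X \in C) && (A \subset X) by move/FCA; rewrite inE.
rewrite Fn0 /=; apply/andP; split; last by apply/bigcapsP => X /AF /andP [].
apply/andP; split; first by apply/subsetP => X /AF /andP [].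
apply/existsP; exists v; apply/forall_inP => X /AF /andP [_ /subsetP]; exact.
Qed.

(* A simplicial complex [P] covered by the full simplices [C] has the Euler
   characteristic of the nerve of [C]: count the pairs (F, A) with [A] a
   simplex inside the common intersection of the subfamily [F]. *)
Lemma euler_char_cover (T : finType) (P : pred {set T}) (C : {set {set T}}) :
  (forall S X : {set T}, X \in C -> S \subset X -> P S) ->
  (forall S : {set T}, P S -> S != set0 -> exists2 X, X \in C & S \subset X) ->
  \sum_(S : {set T} | P S && (S != set0)) (-1) ^+ #|S|.-1 =
  \sum_(F : {set {set T}} | [&& F \subset C, F != set0 &
          [exists v, [forall X in F, v \in X]]]) (-1) ^+ #|F|.-1 :> int.
Proof.
move=> PC CP; symmetry.
transitivity (\sum_(F : {set {set T}} | [&& F \subset C, F != set0 &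
        [exists v, [forall X in F, v \in X]]])
   \sum_(A : {set T} | (A \subset \bigcap_(X in F) X) && (A != set0))
      ((-1) ^+ #|F|.-1 * (-1) ^+ #|A|.-1) : int).
  apply: eq_bigr => F /and3P [_ _ /existsP [v /forall_inP vF]].
  rewrite -mulr_sumr sum_nonempty_subset_sign ?mulr1 //.
  by apply/set0Pn; exists v; apply/bigcapP.
rewrite (exchange_big_dep (fun A : {set T} => A != set0)) /=;
  last by move=> F A _ /andP [].
rewrite (bigID P) /= [X in _ + X]big1 ?addr0 => [|A /andP [An0 nPA]]; last first.
  apply: big1 => F /andP [/and3P [FC /set0Pn [X XF] _] /andP [/bigcapsP AF _]].
  by move: nPA; rewrite (PC A X) ?(subsetP FC) ?AF.
rewrite [LHS](eq_bigl (fun A => P A && (A != set0))) => [|A]; last by rewrite andbC.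
apply: eq_bigr => A /andP [PA An0]; rewrite -mulr_suml.
rewrite (eq_bigl (fun F : {set {set T}} =>
                   (F \subset [set X in C | A \subset X]) && (F != set0)));
  last by move=> F; rewrite An0 andbT nerve_cap_subsetE.
rewrite sum_nonempty_subset_sign ?mul1r //.
by have [X XC AX] := CP A PA An0; apply/set0Pn; exists X; rewrite inE XC.
Qed.

Lemma clique_card_le_omega n (S : {set part n}) : is_clique S -> (#|S| <= omega n)%N.
Proof.
move=> cS; have Hlt : (#|S| < #|{: part n}|.+1)%N by rewrite ltnS max_card.
apply: (@leq_bigmax_cond _ _ _ (Ordinal Hlt)).
by rewrite /ccount -lt0n card_gt0; apply/set0Pn; exists S; rewrite inE cS eqxx.
Qed.

Lemma euler_K_ccount n :
  euler_K n = \sum_(1 <= r < (omega n).+1) (-1) ^+ r.-1 * (ccount n r)%:Z.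
Proof.
have E r : (-1) ^+ r.-1 * (ccount n r)%:Z =
    \sum_(S : {set part n} | is_clique S && (#|S| == r)) (-1) ^+ #|S|.-1.
  rewrite (eq_bigr (fun _ => (-1) ^+ r.-1)) => [|S /andP [_ /eqP -> //]].
  by rewrite /ccount cardsE sumr_const -mulr_natr natz.
rewrite (eq_bigr _ (fun r _ => E r)) (exchange_big_dep (@is_clique n)) /=; last first.
  by move=> r S _ /andP [].
rewrite /euler_K big_mkcondr /=; apply: eq_bigr => S cS.
have [-> | Sn0] /= := eqVneq S set0.
  rewrite big1_seq //= => r /andP [/andP [_ /eqP]]; rewrite cards0 => <-.
  by rewrite mem_index_iota.
have Sr : #|S| \in index_iota 1 (omega n).+1.
  by rewrite mem_index_iota ltnS clique_card_le_omega // andbT lt0n cards_eq0.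
rewrite big_mkcond (bigD1_seq #|S|) /= ?iota_uniq // cS eqxx /=.
by rewrite big1 ?addr0 // => r rS; rewrite eq_sym (negbTE rS).
Qed.

Lemma sub_clique n (S X : {set part n}) : S \subset X -> is_clique X -> is_clique S.
Proof.
move=> /subsetP SX /is_cliqueP cX; apply/is_cliqueP => u v uS vS.
exact: cX (SX u uS) (SX v vS).
Qed.

Theorem proposition3p3 (n : nat) :
  (1 <= n)%N ->
  euler_K n = \sum_(1 <= r < (omega n).+1) (-1) ^+ (r.-1) * (ccount n r)%:Z
  /\ \sum_(1 <= r < (omega n).+1) (-1) ^+ (r.-1) * (ccount n r)%:Z = euler_N n.
Proof.
move=> n_gt0; split; first exact: euler_K_ccount.
rewrite -euler_K_ccount; apply: euler_char_cover.
  by move=> S X /Cfam_clique cX SX; apply: sub_clique cX.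
by move=> S cS Sn0; apply: clique_sub_Cfam.
Qed.
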